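(* Let $(\mathcal C,\mathcal D,O,\vec z,v)$ be a configuration for $(F,f)$, let $C$ be a PB constraint, and suppose there is a substitution $\omega$ such that $$\mathcal C\cup\mathcal D\cup\{f\le v-1\}\cup\{\neg C\}\ \vdash\ (\mathcal C\cup\mathcal D\cup\{C\})|_\omega\ \cup\ \{f|_\omega\le f\}\ \cup\ O(\vec z|_\omega,\vec z).$$ If $(\mathcal C,\mathcal D,O,\vec z,v)$ is weakly valid, then $(\mathcal C,\mathcal D\cup\{C\},O,\vec z,v)$ is weakly valid; if it is valid, then $(\mathcal C,\mathcal D\cup\{C\},O,\vec z,v)$ is valid.
   Context: Boolean variables take values in $\{0,1\}$; a literal is a variable $x$ or $\bar x=1-x$. A PB constraint is $C:\ \sum_i a_i\ell_i\ge A$ with integer $a_i,A$; its negation $\neg C$ is $\sum_i -a_i\ell_i\ge -A+1$. A total assignment $\alpha$ satisfies $C$ if $\sum_i a_i\alpha(\ell_i)\ge A$. A PB formula is a finite set of PB constraints. A substitution $\omega$ maps variables to literals or to $\{0,1\}$ (identity outside its domain, extended to literals by $\omega(\bar x)=\overline{\omega(x)}$); $C|_\omega$ replaces each $\ell_i$ by $\omega(\ell_i)$, $G|_\omega=\{D|_\omega: D\in G\}$, and for a total assignment $\alpha$, $\alpha\circ\omega$ is $x\mapsto\alpha(\omega(x))$. An objective is $f=\sum_i w_i\ell_i$ with integer $w_i$; $f|_\omega=\sum_i w_i\omega(\ell_i)$; $f\le k$ and $f|_\omega\le f$ are read as PB constraints, and for $k=\infty$ the constraints $f\le\infty$, $f\le\infty-1$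 are trivially true (empty). $G\vdash D$ means $D$ is derivable from $G$ in the cutting planes system (axioms from $G$, literal axioms $\ell\ge0$, positive integer linear combinations, division of a constraint with nonnegative coefficients by a positive integer rounding coefficients and degree up), where additionally $G\vdash D$ whenever $0\ge1$ is so derivable from $G\cup\{\neg D\}$; $G\vdash H$ for a set $H$ means $G\vdash D$ for all $D\in H$. This derivability is sound (every total assignment satisfying $G$ satisfies $D$). A preorder encoding is a PB formula $O(\vec u,\vec v)$ over two lists of $n$ placeholder variables with a list $\vec z=(z_1,\dots,z_n)$ of variables, such that $\alpha\preceq\beta$ iff $O(\vec z|_\alpha,\vec z|_\beta)$ is true is reflexive and transitive; here $O(\vec z|_\alpha,\vec z|_\beta)$ is $O$ with $u_i$ replaced by $\alpha(z_i)$ and $v_i$ by $\beta(z_i)$, so $O(\vec z|_\omega,\vec z)$ replaces $u_i$ by $\omega(z_i)$ and $v_i$ by $z_i$. $\alpha\preceq_f\beta$ iff $\alpha\preceq\beta$ and $f(\alpha)\le f(\beta)$. Fix input $F$ and objective $f$. A configuration $(\mathcal C,\mathcal D,O,\vec z,v)$ has PB sets $\mathcal C,\mathcal D$, a preorder encoding, and $v\in\mathbb Z\cup\{\infty\}$. It is weakly valid if (1) for every integer $v'<v$, satisfiability of $F\cup\{f\le v'\}$ implies satisfiability of $\mathcal C\cup\{f\le v'\}$; (2) every total $\rho$ satisfying $\mathcal C\cup\{f\le v-1\}$ admits a total $\rho'\preceq_f\rho$ satisfying $\mathcal C\cup\mathcal D\cup\{f\le v-1\}$. It is valid if also (3) $v<\infty$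 implies $F\cup\{f\le v\}$ satisfiable; (4) for every integer $v'<v$, satisfiability of $\mathcal C\cup\{f\le v'\}$ implies satisfiability of $F\cup\{f\le v'\}$. *)

From Stdlib Require Import ZArith List.
Import ListNotations.
Open Scope Z_scope.

Definition var := nat.

Inductive lit (V : Type) := Pos (x : V) | Neg (x : V).
Arguments Pos {V} x.
Arguments Neg {V} x.

Record con (V : Type) := Con { terms : list (Z * lit V); degree : Z }.
Arguments Con {V} terms degree.
Arguments terms {V} c.
Arguments degree {V} c.

Definition formula (V : Type) := list (con V).

Definition b2z (b : bool) : Z := if b then 1 else 0.

Definition lit_val {V} (a : V -> bool) (l : lit V) : Z :=
  match l with Pos x => b2z (a x) | Neg x => 1 - b2z (a x) end.

Definition lhs {V} (a : V -> bool) (ts : list (Z * lit V)) : Z :=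
  fold_right (fun t s => fst t * lit_val a (snd t) + s) 0 ts.

Definition sat_con {V} (a : V -> bool) (C : con V) : Prop :=
  degree C <= lhs a (terms C).

Definition sat {V} (a : V -> bool) (G : formula V) : Prop :=
  forall C, In C G -> sat_con a C.

Definition satisfiable (G : formula var) : Prop := exists a : var -> bool, sat a G.

Definition negc {V} (C : con V) : con V :=
  Con (map (fun t => (- fst t, snd t)) (terms C)) (- degree C + 1).

(* Coefficient of variable x in the linear form, using  x-bar = 1 - x *)
Definition coef (ts : list (Z * lit var)) (x : var) : Z :=
  fold_right (fun t s =>
    match snd t with
    | Pos y => if Nat.eqb x y then fst t + s else s
    | Neg y => if Nat.eqb x y then s - fst t else s
    end) 0 ts.

(* Constant contributed by negative literals (a * x-bar = a - a * x) *)
Definition negconst (ts : list (Z * lit var)) : Z :=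
  fold_right (fun t s => match snd t with Neg _ => fst t + s | Pos _ => s end) 0 ts.

(* Two constraints are the same linear inequality (after rewriting
   x-bar = 1 - x and collecting terms): syntactic normalization. *)
Definition same_ineq (C D : con var) : Prop :=
  (forall x, coef (terms C) x = coef (terms D) x) /\
  degree C - negconst (terms C) = degree D - negconst (terms D).

Definition ceil_div (a d : Z) : Z := - ((- a) / d).

Inductive cp (G : formula var) : con var -> Prop :=
| cp_ax C : In C G -> cp G C
| cp_lit (l : lit var) : cp G (Con [(1, l)] 0)
| cp_add C D : cp G C -> cp G D ->
    cp G (Con (terms C ++ terms D) (degree C + degree D))
| cp_mul (c : Z) C : 0 < c -> cp G C ->
    cp G (Con (map (fun t => (c * fst t, snd t)) (terms C)) (c * degree C))
| cp_div (d : Z) C : 0 < d -> (forall t, In t (terms C) -> 0 <= fst t) -> cp G C ->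
    cp G (Con (map (fun t => (ceil_div (fst t) d, snd t)) (terms C))
              (ceil_div (degree C) d))
| cp_norm C D : cp G C -> same_ineq C D -> cp G D.

Definition contradiction : con var := Con [] 1.

Definition derives (G : formula var) (D : con var) : Prop :=
  cp G D \/ cp (negc D :: G) contradiction.

Definition derives_all (G H : formula var) : Prop :=
  forall D, In D H -> derives G D.

Inductive img (V : Type) := ILit (l : lit V) | IConst (b : bool).
Arguments ILit {V} l.
Arguments IConst {V} b.

Definition lit_neg {V} (l : lit V) : lit V :=
  match l with Pos x => Neg x | Neg x => Pos x end.

Definition img_neg {V} (i : img V) : img V :=
  match i with ILit l => ILit (lit_neg l) | IConst b => IConst (negb b) end.

Definition subst_lit {V W} (s : V -> img W) (l : lit V) : img W :=
  match l with Pos x => s x | Neg x => img_neg (s x) end.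

(* Replace each literal by its image; constant terms are collected
   (second component) so they can be moved to the degree. *)
Definition subst_terms {V W} (s : V -> img W) (ts : list (Z * lit V))
  : list (Z * lit W) * Z :=
  fold_right (fun t acc =>
    match subst_lit s (snd t) with
    | ILit l => ((fst t, l) :: fst acc, snd acc)
    | IConst b => (fst acc, fst t * b2z b + snd acc)
    end) ([], 0) ts.

Definition subst_con {V W} (s : V -> img W) (C : con V) : con W :=
  Con (fst (subst_terms s (terms C))) (degree C - snd (subst_terms s (terms C))).

Definition subst := list (var * img var).

Definition apply_subst (w : subst) (x : var) : img var :=
  match find (fun p => Nat.eqb (fst p) x) w with
  | Some p => snd p
  | None => ILit (Pos x)
  end.

Definition subst_formula (w : subst) (G : formula var) : formula var :=
  map (subst_con (apply_subst w)) G.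

Definition objective := list (Z * lit var).

Definition obj_val (a : var -> bool) (f : objective) : Z := lhs a f.

Inductive ext := Fin (k : Z) | Inf.

(* f <= k  as  sum -w_i l_i >= -k ; empty for k = infinity *)
Definition obj_le (f : objective) (k : ext) : formula var :=
  match k with
  | Fin k => [Con (map (fun t => (- fst t, snd t)) f) (- k)]
  | Inf => []
  end.

Definition ext_pred (k : ext) : ext :=
  match k with Fin k => Fin (k - 1) | Inf => Inf end.

Definition lt_ext (v' : Z) (v : ext) : Prop :=
  match v with Fin k => v' < k | Inf => True end.

(* f|_w <= f  as  f - f|_w >= 0 *)
Definition obj_subst_le (f : objective) (w : subst) : con var :=
  let p := subst_terms (apply_subst w) f in
  Con (f ++ map (fun t => (- fst t, snd t)) (fst p)) (snd p).

Inductive pvar := PU (i : nat) | PV (i : nat).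

Definition pvar_index (p : pvar) : nat := match p with PU i => i | PV i => i end.
Definition lit_var {V} (l : lit V) : V := match l with Pos x => x | Neg x => x end.

Definition O_holds (O : formula pvar) (z : list var) (a b : var -> bool) : Prop :=
  sat (fun p => match p with
                | PU i => a (nth i z 0%nat)
                | PV i => b (nth i z 0%nat)
                end) O.

Definition preorder_encoding (O : formula pvar) (z : list var) : Prop :=
  (forall C t, In C O -> In t (terms C) -> (pvar_index (lit_var (snd t)) < length z)%nat) /\
  (forall a, O_holds O z a a) /\
  (forall a b c, O_holds O z a b -> O_holds O z b c -> O_holds O z a c).

Definition O_subst (O : formula pvar) (z : list var) (w : subst) : formula var :=
  map (subst_con (fun p => match p with
                           | PU i => apply_subst w (nth i z 0%nat)
                           | PV i => ILit (Pos (nth i z 0%nat))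
                           end)) O.

Definition preceq_f (O : formula pvar) (z : list var) (f : objective)
  (a b : var -> bool) : Prop :=
  O_holds O z a b /\ obj_val a f <= obj_val b f.

Definition weakly_valid (F : formula var) (f : objective)
  (C D : formula var) (O : formula pvar) (z : list var) (v : ext) : Prop :=
  (forall v' : Z, lt_ext v' v ->
     satisfiable (F ++ obj_le f (Fin v')) -> satisfiable (C ++ obj_le f (Fin v'))) /\
  (forall rho : var -> bool, sat rho (C ++ obj_le f (ext_pred v)) ->
     exists rho' : var -> bool, preceq_f O z f rho' rho /\
       sat rho' (C ++ D ++ obj_le f (ext_pred v))).

Definition valid (F : formula var) (f : objective)
  (C D : formula var) (O : formula pvar) (z : list var) (v : ext) : Prop :=
  weakly_valid F f C D O z v /\
  (forall k : Z, v = Fin k -> satisfiable (F ++ obj_le f (Fin k))) /\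
  (forall v' : Z, lt_ext v' v ->
     satisfiable (C ++ obj_le f (Fin v')) -> satisfiable (F ++ obj_le f (Fin v'))).

(* Cutting planes is sound, so every assignment [rho] satisfying
   C u D u {f <= v-1} u {not C} also satisfies the substituted constraints
   (C u D u {C})|_w, f|_w <= f and O(z|_w, z).  By the substitution lemma this
   says that [rho o w] satisfies C u D u {C}, is below [rho] in the preorder
   and has objective value at most that of [rho] (hence still f <= v-1).  An
   assignment already satisfying C is kept as it is; otherwise it is replaced
   by [rho o w], and transitivity of the preorder chains this step with the
   witness provided by the old configuration.  Conditions (1), (3) and (4) do
   not mention D and carry over unchanged. *)
From Stdlib Require Import ZArith List Lia.
Import ListNotations.
Open Scope Z_scope.

Lemma lit_val_bounds {V} (a : V -> bool) (l : lit V) : 0 <= lit_val a l <= 1.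
Proof. destruct l as [x|x]; simpl; destruct (a x); simpl; lia. Qed.

Lemma lhs_app {V} (a : V -> bool) ts1 ts2 :
  lhs a (ts1 ++ ts2) = lhs a ts1 + lhs a ts2.
Proof. induction ts1 as [|t ts IH]; simpl; [lia|]. unfold lhs in *; simpl; lia. Qed.

Lemma lhs_opp {V} (a : V -> bool) ts :
  lhs a (map (fun t => (- fst t, snd t)) ts) = - lhs a ts.
Proof. induction ts as [|t ts IH]; simpl; [lia|]. unfold lhs in *; simpl; lia. Qed.

Lemma lhs_scale {V} (a : V -> bool) c ts :
  lhs a (map (fun t => (c * fst t, snd t)) ts) = c * lhs a ts.
Proof. induction ts as [|t ts IH]; simpl; [lia|]. unfold lhs in *; simpl; lia. Qed.

Lemma lhs_ext {V} (a b : V -> bool) ts :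
  (forall x, a x = b x) -> lhs a ts = lhs b ts.
Proof.
  intros Hab; induction ts as [|[c l] ts IH]; [reflexivity|].
  unfold lhs in *; simpl; rewrite IH.
  destruct l; simpl; rewrite Hab; reflexivity.
Qed.

Lemma sat_con_negc {V} (a : V -> bool) (C : con V) :
  sat_con a (negc C) <-> ~ sat_con a C.
Proof. unfold sat_con, negc; simpl; rewrite lhs_opp; lia. Qed.

Lemma sat_app {V} (a : V -> bool) (G H : formula V) :
  sat a (G ++ H) <-> sat a G /\ sat a H.
Proof.
  unfold sat; split.
  - intros HGH; split; intros X HX; apply HGH, in_or_app; auto.
  - intros [HG HH] X HX; apply in_app_or in HX as [HX|HX]; auto.
Qed.

Lemma sat_singleton {V} (a : V -> bool) (C : con V) : sat a [C] <-> sat_con a C.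
Proof. split; [intros H; apply H; left; reflexivity | intros H X [<-|[]]; exact H]. Qed.

Lemma ceil_div_spec a d : 0 < d -> a <= d * ceil_div a d.
Proof. intros Hd; unfold ceil_div; pose proof (Z.mul_div_le (- a) d Hd); lia. Qed.

Lemma ceil_div_le a S d : 0 < d -> a <= d * S -> ceil_div a d <= S.
Proof.
  intros Hd HaS; unfold ceil_div.
  assert (- S <= (- a) / d) by (apply Z.div_le_lower_bound; lia); lia.
Qed.

(* Termwise from [c <= d * ceil_div c d], as literal values are nonnegative;
   no sign condition on the coefficients is needed here. *)
Lemma lhs_ceil_div {V} (a : V -> bool) d ts : 0 < d ->
  lhs a ts <= d * lhs a (map (fun t => (ceil_div (fst t) d, snd t)) ts).
Proof.
  intros Hd; induction ts as [|t ts IH]; unfold lhs in *; simpl; [lia|].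
  pose proof (ceil_div_spec (fst t) d Hd); pose proof (lit_val_bounds a (snd t)); nia.
Qed.

Definition sum_over (h : var -> Z) (L : list var) : Z :=
  fold_right (fun x s => h x + s) 0 L.

Lemma sum_over_ext h1 h2 L :
  (forall x, In x L -> h1 x = h2 x) -> sum_over h1 L = sum_over h2 L.
Proof.
  induction L as [|y L IH]; intros Hh; simpl; [reflexivity|].
  rewrite Hh, IH; [reflexivity | intros x Hx; apply Hh; right; exact Hx | left; reflexivity].
Qed.

Lemma sum_over_add h1 h2 L :
  sum_over (fun x => h1 x + h2 x) L = sum_over h1 L + sum_over h2 L.
Proof. induction L; simpl; lia. Qed.

Lemma sum_over_zero L : sum_over (fun _ => 0) L = 0.
Proof. induction L; simpl; lia. Qed.

Lemma sum_over_indicator e y L : NoDup L -> In y L ->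
  sum_over (fun x => if Nat.eqb x y then e else 0) L = e.
Proof.
  induction 1 as [|x L Hx HL IH]; simpl; [tauto|]; intros [<-|Hy].
  - rewrite Nat.eqb_refl, (sum_over_ext _ (fun _ => 0)), sum_over_zero; [lia|].
    intros x' Hx'; destruct (Nat.eqb_spec x' x); subst; tauto.
  - rewrite IH by exact Hy; destruct (Nat.eqb_spec x y); subst; tauto.
Qed.

(* The normal form behind [same_ineq]; any duplicate-free list of variables
   covering the literals of [ts] may serve as the summation range. *)
Lemma lhs_normal_form (a : var -> bool) ts L : NoDup L ->
  (forall t, In t ts -> In (lit_var (snd t)) L) ->
  lhs a ts = negconst ts + sum_over (fun x => coef ts x * b2z (a x)) L.
Proof.
  intros HL; induction ts as [|[c l] ts IH]; intros Hcov.
  { simpl; rewrite sum_over_zero; reflexivity. }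
  assert (Hy : In (lit_var l) L) by (apply (Hcov (c, l)); left; reflexivity).
  change (lhs a ((c, l) :: ts)) with (c * lit_val a l + lhs a ts).
  rewrite IH by (intros; apply Hcov; right; assumption).
  destruct l as [y|y]; simpl in Hy.
  - rewrite (sum_over_ext (fun x => coef ((c, Pos y) :: ts) x * b2z (a x))
                          (fun x => coef ts x * b2z (a x)
                                      + (if Nat.eqb x y then c * b2z (a y) else 0))).
    + change (negconst ((c, Pos y) :: ts)) with (negconst ts).
      rewrite sum_over_add, sum_over_indicator by assumption; simpl; lia.
    + intros x _; simpl; destruct (Nat.eqb_spec x y); subst; lia.
  - rewrite (sum_over_ext (fun x => coef ((c, Neg y) :: ts) x * b2z (a x))
                          (fun x => coef ts x * b2z (a x)
                                      + (if Nat.eqb x y then - c * b2z (a y) else 0))).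
    + change (negconst ((c, Neg y) :: ts)) with (c + negconst ts).
      change (lit_val a (Neg y)) with (1 - b2z (a y)).
      rewrite sum_over_add, sum_over_indicator by assumption; lia.
    + intros x _; simpl; destruct (Nat.eqb_spec x y); subst; lia.
Qed.

Lemma same_ineq_sound (a : var -> bool) C D :
  same_ineq C D -> sat_con a C -> sat_con a D.
Proof.
  intros [Hcoef Hdeg] HC; unfold sat_con in *.
  set (L := nodup Nat.eq_dec (map (fun t => lit_var (snd t)) (terms C ++ terms D))).
  assert (HL : NoDup L) by apply NoDup_nodup.
  assert (Hcov : forall t, In t (terms C ++ terms D) -> In (lit_var (snd t)) L).
  { intros t Ht; apply nodup_In, in_map_iff; eauto. }
  rewrite (lhs_normal_form a (terms C) L HL) in HC
    by (intros t Ht; apply Hcov, in_or_app; auto).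
  rewrite (lhs_normal_form a (terms D) L HL)
    by (intros t Ht; apply Hcov, in_or_app; auto).
  rewrite (sum_over_ext _ (fun x => coef (terms C) x * b2z (a x)))
    by (intros; rewrite Hcoef; reflexivity).
  lia.
Qed.

Lemma cp_sound (a : var -> bool) G D : sat a G -> cp G D -> sat_con a D.
Proof.
  intros HG; induction 1 as [C HC|l|C D _ HC _ HD|c C Hc _ HC|d C Hd _ _ HC|C D _ HC Hsame];
    unfold sat_con in *; cbn [terms degree].
  - apply HG; exact HC.
  - change (lhs a [(1, l)]) with (1 * lit_val a l + 0); pose proof (lit_val_bounds a l); lia.
  - rewrite lhs_app; lia.
  - rewrite lhs_scale; nia.
  - apply ceil_div_le; [exact Hd|]; pose proof (lhs_ceil_div a d (terms C) Hd); lia.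
  - exact (same_ineq_sound a C D Hsame HC).
Qed.

Lemma derives_sound (a : var -> bool) G D : sat a G -> derives G D -> sat_con a D.
Proof.
  intros HG [Hcp|Hrefute]; [exact (cp_sound a G D HG Hcp)|].
  destruct (Z_le_gt_dec (degree D) (lhs a (terms D))) as [HD|HnD]; [exact HD|].
  assert (Hneg : sat a (negc D :: G)).
  { intros X [<-|HX]; [apply sat_con_negc; unfold sat_con; lia | exact (HG X HX)]. }
  pose proof (cp_sound a _ _ Hneg Hrefute) as Hbot.
  unfold sat_con in Hbot; simpl in Hbot; lia.
Qed.

Lemma derives_all_sound (a : var -> bool) G H :
  sat a G -> derives_all G H -> sat a H.
Proof. intros HG Hder X HX; exact (derives_sound a G X HG (Hder X HX)). Qed.

Definition comp_assign {V W} (a : W -> bool) (s : V -> img W) (x : V) : bool :=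
  match s x with
  | ILit (Pos y) => a y
  | ILit (Neg y) => negb (a y)
  | IConst b => b
  end.

Definition img_val {W} (a : W -> bool) (i : img W) : Z :=
  match i with ILit l => lit_val a l | IConst b => b2z b end.

Lemma img_val_neg {W} (a : W -> bool) i : img_val a (img_neg i) = 1 - img_val a i.
Proof. destruct i as [[y|y]|[]]; simpl; try destruct (a y); reflexivity. Qed.

Lemma lit_val_comp_assign {V W} (a : W -> bool) (s : V -> img W) l :
  lit_val (comp_assign a s) l = img_val a (subst_lit s l).
Proof.
  assert (Hvar : forall x, b2z (comp_assign a s x) = img_val a (s x)).
  { intros x; unfold comp_assign; destruct (s x) as [[y|y]|b]; simpl;
      try destruct (a y); reflexivity. }
  destruct l as [x|x]; simpl; [|rewrite img_val_neg]; rewrite Hvar; reflexivity.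
Qed.

Lemma lhs_subst_terms {V W} (a : W -> bool) (s : V -> img W) ts :
  lhs a (fst (subst_terms s ts)) + snd (subst_terms s ts) = lhs (comp_assign a s) ts.
Proof.
  induction ts as [|[c l] ts IH]; [reflexivity|].
  change (lhs (comp_assign a s) ((c, l) :: ts))
    with (c * lit_val (comp_assign a s) l + lhs (comp_assign a s) ts).
  rewrite lit_val_comp_assign, <- IH; simpl.
  destruct (subst_lit s l) as [l'|b]; simpl; unfold lhs; simpl; lia.
Qed.

Lemma sat_con_subst {V W} (a : W -> bool) (s : V -> img W) C :
  sat_con a (subst_con s C) <-> sat_con (comp_assign a s) C.
Proof. unfold sat_con, subst_con; simpl; rewrite <- lhs_subst_terms; lia. Qed.

Lemma sat_subst_formula (a : var -> bool) w G :
  sat a (subst_formula w G) -> sat (comp_assign a (apply_subst w)) G.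
Proof. intros Ha X HX; apply sat_con_subst, Ha, in_map, HX. Qed.

Lemma sat_obj_subst_le (a : var -> bool) f w :
  sat_con a (obj_subst_le f w) ->
  obj_val (comp_assign a (apply_subst w)) f <= obj_val a f.
Proof.
  unfold sat_con, obj_subst_le, obj_val; simpl.
  rewrite lhs_app, lhs_opp, <- lhs_subst_terms; lia.
Qed.

Lemma sat_O_subst (a : var -> bool) O z w :
  sat a (O_subst O z w) -> O_holds O z (comp_assign a (apply_subst w)) a.
Proof.
  intros Ha X HX.
  assert (HaX := Ha _ (in_map _ _ _ HX)); apply sat_con_subst in HaX.
  unfold sat_con in *; erewrite lhs_ext; [exact HaX|].
  intros [i|i]; reflexivity.
Qed.

Lemma obj_le_antitone f k (a b : var -> bool) :
  obj_val a f <= obj_val b f -> sat b (obj_le f k) -> sat a (obj_le f k).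
Proof.
  intros Hab Hb; destruct k as [k|]; [|intros X []].
  apply sat_singleton in Hb; apply sat_singleton.
  unfold sat_con, obj_val in *; simpl in *; rewrite lhs_opp in *; lia.
Qed.

Lemma preceq_f_refl O z f (a : var -> bool) :
  preorder_encoding O z -> preceq_f O z f a a.
Proof. intros [_ [Hrefl _]]; split; [apply Hrefl | lia]. Qed.

Lemma preceq_f_trans O z f (a b c : var -> bool) : preorder_encoding O z ->
  preceq_f O z f a b -> preceq_f O z f b c -> preceq_f O z f a c.
Proof. intros [_ [_ Htrans]] [Hab Hfab] [Hbc Hfbc]; split; [eapply Htrans; eauto | lia]. Qed.

Section Redundance.

Variables (f : objective) (C D : formula var) (O : formula pvar) (z : list var).
Variables (v : ext) (Cn : con var) (w : subst).

Hypothesis O_preorder : preorder_encoding O z.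
Hypothesis redundant :
  derives_all (C ++ D ++ obj_le f (ext_pred v) ++ [negc Cn])
    (subst_formula w (C ++ D ++ [Cn]) ++ [obj_subst_le f w] ++ O_subst O z w).

Lemma redundance_witness (rho : var -> bool) :
  sat rho (C ++ D ++ obj_le f (ext_pred v)) -> ~ sat_con rho Cn ->
  preceq_f O z f (comp_assign rho (apply_subst w)) rho /\
  sat (comp_assign rho (apply_subst w)) (C ++ (D ++ [Cn]) ++ obj_le f (ext_pred v)).
Proof.
  intros Hrho HnCn.
  assert (Hprem : sat rho (C ++ D ++ obj_le f (ext_pred v) ++ [negc Cn])).
  { rewrite !sat_app, sat_singleton, sat_con_negc; rewrite !sat_app in Hrho; tauto. }
  pose proof (derives_all_sound rho _ _ Hprem redundant) as Himg.
  rewrite !sat_app, sat_singleton in Himg; destruct Himg as [HCD [Hobj HO]].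
  apply sat_subst_formula in HCD; apply sat_obj_subst_le in Hobj.
  apply sat_O_subst in HO.
  assert (Hbound : sat (comp_assign rho (apply_subst w)) (obj_le f (ext_pred v))).
  { apply (obj_le_antitone f _ _ rho Hobj); rewrite !sat_app in Hrho; tauto. }
  split; [split; assumption|].
  rewrite !sat_app in HCD; rewrite !sat_app; tauto.
Qed.

Lemma redundance_step (rho : var -> bool) :
  sat rho (C ++ D ++ obj_le f (ext_pred v)) ->
  exists rho', preceq_f O z f rho' rho /\
    sat rho' (C ++ (D ++ [Cn]) ++ obj_le f (ext_pred v)).
Proof.
  intros Hrho; destruct (Z_le_gt_dec (degree Cn) (lhs rho (terms Cn))) as [HCn|HnCn].
  - exists rho; split; [apply preceq_f_refl; exact O_preorder|].
    rewrite !sat_app, sat_singleton in *; tauto.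
  - exists (comp_assign rho (apply_subst w)).
    apply redundance_witness; [exact Hrho | unfold sat_con; lia].
Qed.

Lemma weakly_valid_redundance F :
  weakly_valid F f C D O z v -> weakly_valid F f C (D ++ [Cn]) O z v.
Proof.
  intros [Hopt Hwit]; split; [exact Hopt|].
  intros rho Hrho; destruct (Hwit rho Hrho) as [rho' [Hle Hrho']].
  destruct (redundance_step rho' Hrho') as [rho'' [Hle' Hrho'']].
  exists rho''; split; [exact (preceq_f_trans _ _ _ _ _ _ O_preorder Hle' Hle) | exact Hrho''].
Qed.

End Redundance.

Theorem mainTheorem4 (F : formula var) (f : objective)
  (C D : formula var) (O : formula pvar) (z : list var) (v : ext)
  (Cn : con var) (w : subst) :
  preorder_encoding O z ->
  derives_all (C ++ D ++ obj_le f (ext_pred v) ++ [negc Cn])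
    (subst_formula w (C ++ D ++ [Cn]) ++ [obj_subst_le f w] ++ O_subst O z w) ->
  (weakly_valid F f C D O z v -> weakly_valid F f C (D ++ [Cn]) O z v) /\
  (valid F f C D O z v -> valid F f C (D ++ [Cn]) O z v).
Proof.
  intros Hpre Hder.
  pose proof (weakly_valid_redundance f C D O z v Cn w Hpre Hder F) as Hweak.
  split; [exact Hweak|].
  intros [Hwv Hrest]; split; [exact (Hweak Hwv) | exact Hrest].
Qed.
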